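(* Let $r>0$, let $(w_x,w_y)\in\mathbb{R}^2$ with $v_w=\sqrt{w_x^2+w_y^2}\in(0,1)$, and let $(x_f,y_f,\theta_f)$ be any goal pose with $(x_f,y_f)\in\mathbb{R}^2$ and $\theta_f\in[0,2\pi)$. Then there exists a $4\pi$-arc $LSL$ path that reaches the goal pose $(x_f,y_f,\theta_f)$ from the start pose $(0,0,0)$, and there also exists a $4\pi$-arc $RSR$ path that reaches it. That is, each of the two path types individually provides full reachability.
   Context: Setting: a vehicle moves in the plane at unit speed with minimum turning radius $r>0$, in a steady current of velocity $(w_x,w_y)$ whose speed is $v_w=\sqrt{w_x^2+w_y^2}$. It is assumed throughout that $0<v_w<1$. The start pose is $(0,0,0)$ and a goal pose is $(x_f,y_f,\theta_f)$ with $\theta_f\in[0,2\pi)$. $LSL$ paths: such a path has parameters $(\alpha,\beta,\gamma)$ with $\alpha,\gamma\ge 0$ and $\beta\ge0$. It consists of a maximal-curvature left arc of turning angle $\alpha$, then a straight segment of length $\beta$, then a left arc of turning angle $\gamma$, all traversed in the frame moving with the current. Its travel time is $T=r(\alpha+\gamma)+\beta$. It reaches the goal pose iff there is $k\in\mathbb{Z}$ such that $\alpha+\gamma=2k\pi+\theta_f$, $x_f-w_xT=r\sin\theta_f+\beta\cos\alpha$, and $y_f-w_yT=r(1-\cos\theta_f)+\beta\sin\alpha$. $RSR$ paths: such a path has parameters $(\alpha,\beta,\gamma)$ with $\alpha,\gamma\ge0$ and $\beta\ge 0$, right arcs, and travel time $T=r(\alpha+\gamma)+\beta$. It reaches the goal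 pose iff there is $k\in\mathbb{Z}$ such that $-\alpha-\gamma=2k\pi+\theta_f$, $x_f-w_xT=-r\sin\theta_f+\beta\cos\alpha$, and $y_f-w_yT=-r(1-\cos\theta_f)-\beta\sin\alpha$. Arc-range classes: an $LSL$ or $RSR$ path is called a $2\pi$-arc path if $\alpha,\gamma\in[0,2\pi)$, and a $4\pi$-arc path if $\alpha,\gamma\in[0,4\pi)$. *)

From Stdlib Require Import Reals.
Open Scope R_scope.

Definition travel_time (r alpha beta gamma : R) : R := r * (alpha + gamma) + beta.

(* The LSL path with parameters (alpha,beta,gamma), traversed in the frame moving
   with the current (wx,wy), reaches the goal pose (xf,yf,thf) from (0,0,0). *)
Definition LSL_reaches (r wx wy xf yf thf alpha beta gamma : R) : Prop :=
  0 <= alpha /\ 0 <= beta /\ 0 <= gamma /\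
  (exists k : Z, alpha + gamma = 2 * IZR k * PI + thf) /\
  xf - wx * travel_time r alpha beta gamma = r * sin thf + beta * cos alpha /\
  yf - wy * travel_time r alpha beta gamma = r * (1 - cos thf) + beta * sin alpha.

Definition RSR_reaches (r wx wy xf yf thf alpha beta gamma : R) : Prop :=
  0 <= alpha /\ 0 <= beta /\ 0 <= gamma /\
  (exists k : Z, - alpha - gamma = 2 * IZR k * PI + thf) /\
  xf - wx * travel_time r alpha beta gamma = - r * sin thf + beta * cos alpha /\
  yf - wy * travel_time r alpha beta gamma = - r * (1 - cos thf) - beta * sin alpha.

Definition arc4pi (alpha gamma : R) : Prop :=
  0 <= alpha < 4 * PI /\ 0 <= gamma < 4 * PI.

Definition exists_4pi_LSL (r wx wy xf yf thf : R) : Prop :=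
  exists alpha beta gamma, arc4pi alpha gamma /\ LSL_reaches r wx wy xf yf thf alpha beta gamma.

Definition exists_4pi_RSR (r wx wy xf yf thf : R) : Prop :=
  exists alpha beta gamma, arc4pi alpha gamma /\ RSR_reaches r wx wy xf yf thf alpha beta gamma.

(* In the frame moving with the current, an LSL path with total turning
   F = alpha + gamma drifts by r F w during its arcs, and its straight segment
   of heading alpha contributes beta ((cos alpha, sin alpha) + w) in ground
   coordinates.  Fixing F in [2 pi, 4 pi] congruent to thf modulo 2 pi, it
   remains to write the residual displacement as beta (u + w) with u a unit
   vector and beta >= 0.  Since |w| < 1, the point -w lies inside the unit
   circle, so every ray from -w meets it: this gives u = (cos alpha, sin alpha)
   with alpha in (0, 2 pi], and then gamma = F - alpha lies in [0, 4 pi).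
   RSR paths are the mirror images of LSL paths in the x-axis. *)

From Stdlib Require Import Reals Lra.
Open Scope R_scope.

Lemma unit_vector_angle (ux uy : R) :
  ux ^ 2 + uy ^ 2 = 1 -> exists a, 0 < a <= 2 * PI /\ cos a = ux /\ sin a = uy.
Proof.
  intros Hu. pose proof PI_RGT_0.
  assert (Hux : -1 <= ux <= 1) by nra.
  assert (Hsin : sqrt (1 - ux²) = Rabs uy).
  { rewrite <- sqrt_Rsqr_abs. f_equal. unfold Rsqr. lra. }
  pose proof (acos_bound ux).
  destruct (Rle_or_lt 0 uy) as [Huy | Huy].
  - destruct (Req_dec ux 1) as [Hx1 | Hx1].
    + exists (2 * PI). rewrite cos_2PI, sin_2PI. nra.
    + exists (acos ux).
      assert (acos ux <> 0).
      { intro E. pose proof (cos_acos ux Hux) as C. rewrite E, cos_0 in C. lra. }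
      rewrite cos_acos, sin_acos, Hsin, Rabs_right by lra. lra.
  - exists (2 * PI - acos ux).
    rewrite cos_minus, sin_minus, cos_2PI, sin_2PI, cos_acos, sin_acos, Hsin,
      Rabs_left by lra.
    split; [lra | split; ring].
Qed.

(* The witness is the positive root of [t^2 - 2 (e.w) t - (1 - |w|^2) = 0]. *)
Lemma ray_meets_unit_circle (ex ey wx wy : R) :
  ex ^ 2 + ey ^ 2 = 1 -> wx ^ 2 + wy ^ 2 < 1 ->
  exists t, 0 < t /\ (t * ex - wx) ^ 2 + (t * ey - wy) ^ 2 = 1.
Proof.
  intros He Hw.
  set (d := ex * wx + ey * wy).
  set (c := 1 - (wx ^ 2 + wy ^ 2)).
  assert (Hc : 0 < c) by (unfold c; lra).
  set (s := sqrt (d ^ 2 + c)).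
  assert (Hs2 : s * s = d ^ 2 + c) by (apply sqrt_sqrt; nra).
  assert (Hs0 : 0 <= s) by apply sqrt_pos.
  exists (d + s). split.
  { assert (Hspos : 0 < s) by (apply sqrt_lt_R0; nra).
    destruct (Rle_or_lt 0 d); nra. }
  replace ((_ - wx) ^ 2 + (_ - wy) ^ 2)
    with ((d + s) ^ 2 * (ex ^ 2 + ey ^ 2) - 2 * (d + s) * d + (wx ^ 2 + wy ^ 2))
    by (unfold d; ring).
  rewrite He. unfold c in Hs2. nra.
Qed.

Lemma wind_triangle (qx qy wx wy : R) :
  wx ^ 2 + wy ^ 2 < 1 ->
  exists a b, 0 < a <= 2 * PI /\ 0 <= b /\
    qx = b * (cos a + wx) /\ qy = b * (sin a + wy).
Proof.
  intros Hw. pose proof PI_RGT_0.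
  destruct (Req_dec (qx ^ 2 + qy ^ 2) 0) as [Hq0 | Hq0].
  { exists (2 * PI), 0. rewrite cos_2PI, sin_2PI. nra. }
  set (n := sqrt (qx ^ 2 + qy ^ 2)).
  assert (Hn : 0 < n) by (apply sqrt_lt_R0; nra).
  assert (Hn2 : n * n = qx ^ 2 + qy ^ 2) by (apply sqrt_sqrt; nra).
  assert (He : (qx / n) ^ 2 + (qy / n) ^ 2 = 1).
  { replace ((qx / n) ^ 2 + (qy / n) ^ 2) with ((qx ^ 2 + qy ^ 2) / (n * n))
      by (field; lra).
    rewrite Hn2. field. lra. }
  destruct (ray_meets_unit_circle _ _ _ _ He Hw) as (t & Ht & Hu).
  destruct (unit_vector_angle _ _ Hu) as (a & Ha & Hcos & Hsin).
  exists a, (n / t). split; [exact Ha |].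
  split; [apply Rlt_le, Rdiv_lt_0_compat; lra |].
  rewrite Hcos, Hsin. split; field; lra.
Qed.

Lemma exists_4pi_LSL_of_total_turn (r wx wy xf yf thf F : R) (k : Z) :
  wx ^ 2 + wy ^ 2 < 1 -> F = 2 * IZR k * PI + thf -> 2 * PI <= F <= 4 * PI ->
  exists_4pi_LSL r wx wy xf yf thf.
Proof.
  intros Hw HF HFb. pose proof PI_RGT_0.
  destruct (wind_triangle (xf - r * sin thf - wx * r * F)
              (yf - r * (1 - cos thf) - wy * r * F) wx wy Hw)
    as (a & b & Ha & Hb & Ex & Ey).
  exists a, b, (F - a). unfold arc4pi, LSL_reaches, travel_time.
  replace (a + (F - a)) with F by ring.
  repeat split; try lra.
  exists k. lra.
Qed.

Lemma exists_4pi_RSR_of_mirror_LSL (r wx wy xf yf thf : R) :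
  exists_4pi_LSL r wx (- wy) xf (- yf) (- thf) ->
  exists_4pi_RSR r wx wy xf yf thf.
Proof.
  intros (a & b & c & Harc & Ha & Hb & Hc & [k Hk] & Ex & Ey).
  exists a, b, c. split; [exact Harc |].
  unfold RSR_reaches. rewrite sin_neg, cos_neg in *.
  repeat split; try lra.
  exists (- k)%Z. rewrite opp_IZR. lra.
Qed.

Theorem theorem1 (r wx wy xf yf thf : R) :
  0 < r ->
  0 < sqrt (wx ^ 2 + wy ^ 2) < 1 ->
  0 <= thf < 2 * PI ->
  exists_4pi_LSL r wx wy xf yf thf /\ exists_4pi_RSR r wx wy xf yf thf.
Proof.
  intros _ [_ Hw] Hth. pose proof PI_RGT_0.
  rewrite <- sqrt_1 in Hw. apply sqrt_lt_0_alt in Hw.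
  split.
  - apply (exists_4pi_LSL_of_total_turn _ _ _ _ _ _ (thf + 2 * PI) 1);
      [exact Hw | simpl; ring | lra].
  - apply exists_4pi_RSR_of_mirror_LSL.
    apply (exists_4pi_LSL_of_total_turn _ _ _ _ _ _ (4 * PI - thf) 2);
      [nra | simpl; ring | lra].
Qed.
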